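(* Let $2\leq k\leq d$, $\theta>0$, $v_1,\dots,v_k,w\in S^{d-1}$, and suppose $\Theta(\sigma(0,v_1,\dots,v_k))\geq\theta$. Then there exists $1\leq i\leq k$ such that $$\Theta(\sigma(0,v_1,\dots,v_{i-1},w,v_{i+1},\dots,v_k))\geq\frac{\theta}{k\,2^{k+1}}.$$
   Context: For $a_0,\dots,a_k\in\mathbb{R}^d$, $\sigma(a_0,\dots,a_k)=\operatorname{conv}\{a_0,\dots,a_k\}$, $|\sigma|$ denotes its $k$-dimensional volume, and for $\operatorname{diam}\sigma>0$ the fullness is $\Theta(\sigma)=|\sigma|/(\operatorname{diam}\sigma)^k$. $S^{d-1}$ is the unit sphere of $\mathbb{R}^d$. *)

From HB Require Import structures.
From mathcomp Require Import all_boot all_order all_algebra.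
Set Implicit Arguments. Unset Strict Implicit. Unset Printing Implicit Defensive.
Import Order.TTheory GRing.Theory Num.Theory.
Local Open Scope ring_scope.

Section Simplex.
Variables (R : rcfType) (d : nat).

Definition dotp (u v : 'rV[R]_d) : R := (u *m v^T) 0 0.
Definition enorm (u : 'rV[R]_d) : R := Num.sqrt (dotp u u).

(* A k-simplex sigma(a_0,...,a_k) given by its vertices a : 'I_k.+1 -> R^d. *)
Definition edge_mx (k : nat) (a : 'I_k.+1 -> 'rV[R]_d) : 'M[R]_(k, d) :=
  \matrix_(i < k, j < d) (a (lift ord0 i) 0 j - a ord0 0 j).

Definition svol (k : nat) (a : 'I_k.+1 -> 'rV[R]_d) : R :=
  Num.sqrt (\det (edge_mx a *m (edge_mx a)^T)) / (k`!)%:R.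

Definition sdiam (k : nat) (a : 'I_k.+1 -> 'rV[R]_d) : R :=
  \big[Num.max/0]_(i < k.+1) \big[Num.max/0]_(j < k.+1) enorm (a i - a j).

(* fullness Theta = |sigma| / (diam sigma)^k (meaningful when diam > 0). *)
Definition fullness (k : nat) (a : 'I_k.+1 -> 'rV[R]_d) : R :=
  svol a / (sdiam a) ^+ k.

Definition simplex0 (k : nat) (v : 'I_k -> 'rV[R]_d) : 'I_k.+1 -> 'rV[R]_d :=
  fun j => match unlift ord0 j with Some i => v i | None => 0 end.

Definition replace_at (k : nat) (v : 'I_k -> 'rV[R]_d) (i : 'I_k) (w : 'rV[R]_d)
  : 'I_k -> 'rV[R]_d := fun j => if j == i then w else v j.

End Simplex.

(* Let G be the Gram matrix of v_1, ..., v_k, so that |sigma(0, v)| = sqrt(det G) / k!;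
   as the diameter lies in [1, 2], fullness and volume agree up to a factor 2^k.
   Write w = c V + u with u orthogonal to every v_j.  Replacing v_i by w turns the
   Gram determinant into c_i^2 det G + |u|^2 C_ii, where the cofactor C_ii (the Gram
   determinant of the other v_j) is at least det G because |v_i| = 1.  Since
   1 = |w|^2 = |c V|^2 + |u|^2 <= k sum_j c_j^2 + |u|^2, an index i with c_i^2
   maximal gives k^2 (c_i^2 + |u|^2) >= 1, so for that i the volume drops by at most
   a factor k.  This even yields the bound theta / (k 2^k). *)
From HB Require Import structures.
From mathcomp Require Import all_boot all_order all_algebra.
From mathcomp Require Import ring lra.
Set Implicit Arguments. Unset Strict Implicit. Unset Printing Implicit Defensive.
Import Order.TTheory GRing.Theory Num.Theory.
Local Open Scope ring_scope.

Section SetRow.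
Variable R : comRingType.

Definition set_row m n (A : 'M[R]_(m, n)) (i : 'I_m) (x : 'rV[R]_n) :=
  \matrix_(j, l) if j == i then x 0 l else A j l.

Lemma row_set_row m n (A : 'M[R]_(m, n)) i x j :
  row j (set_row A i x) = if j == i then x else row j A.
Proof. by apply/rowP => l; rewrite !mxE; case: (j == i); rewrite ?mxE. Qed.

Lemma set_row_mulmx m n p (A : 'M[R]_(m, n)) (B : 'M[R]_(n, p)) i x :
  set_row A i x *m B = set_row (A *m B) i (x *m B).
Proof.
by apply/row_matrixP => j; rewrite row_mul !row_set_row row_mul; case: eqP.
Qed.

Lemma set_rowD m n (A : 'M[R]_(m, n)) i x y :
  set_row A i (x + y) = set_row A i x + delta_mx i 0 *m y.
Proof.
apply/row_matrixP => j; rewrite linearD /= !row_set_row row_mul rowE.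
rewrite mul_delta_mx_cond; case: (j == i); last by rewrite mulr0n mul0mx addr0.
by rewrite mulr1n -rowE row_id.
Qed.

Lemma mulmx_tr_entry m n p (A : 'M[R]_(m, n)) (M : 'M[R]_n) (B : 'M[R]_(p, n)) a b :
  (A *m M *m B^T) a b = (row a A *m M *m (row b B)^T) 0 0.
Proof.
rewrite !mxE; apply: eq_bigr => l _; rewrite !mxE; congr (_ * _).
by apply: eq_bigr => q _; rewrite !mxE.
Qed.

Lemma eq_cofactor n (A B : 'M[R]_n) i j :
  (forall a b, a != i -> b != j -> A a b = B a b) ->
  cofactor A i j = cofactor B i j.
Proof.
move=> eqAB; rewrite /cofactor; congr (_ * \det _).
by apply/matrixP => a b; rewrite !mxE eqAB // eq_sym neq_lift.
Qed.

Lemma det_set_row n (A : 'M[R]_n) i x :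
  \det (set_row A i x) = \sum_j x 0 j * cofactor A i j.
Proof.
rewrite (expand_det_row _ i); apply: eq_bigr => j _; rewrite mxE eqxx.
by congr (_ * _); apply: eq_cofactor => a b /negbTE ai _; rewrite mxE ai.
Qed.

Lemma det_set_row1 n (c : 'rV[R]_n) i : \det (set_row 1%:M i c) = c 0 i.
Proof.
have cof1 j : cofactor (1%:M : 'M[R]_n) i j = (i == j)%:R.
  by have /matrixP/(_ j i) := adj1 R n; rewrite !mxE eq_sym.
rewrite det_set_row (bigD1 i) //= big1 => [|j ji]; first by rewrite cof1 eqxx mulr1 addr0.
by rewrite cof1 eq_sym (negbTE ji) mulr0.
Qed.

Lemma det_add_delta n (A : 'M[R]_n) i t :
  \det (A + t *: delta_mx i i) = \det A + t * cofactor A i i.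
Proof.
have -> : A + t *: delta_mx i i = set_row A i (row i A + t *: delta_mx 0 i).
  by apply/matrixP => a b; rewrite !mxE eqxx; case: eqP => [->|_]; rewrite ?mulr0 ?addr0.
rewrite det_set_row (expand_det_row A i) (bigD1 i) //= [in RHS](bigD1 i) //=.
rewrite !mxE !eqxx mulr1 mulrDl -!addrA; congr (_ + _); rewrite addrC; congr (_ + _).
by apply: eq_bigr => j ji; rewrite !mxE (negbTE ji) mulr0 addr0.
Qed.

Lemma cofactor_set_row1_conj n (M : 'M[R]_n) i c :
  cofactor (set_row 1%:M i c *m M *m (set_row 1%:M i c)^T) i i = cofactor M i i.
Proof.
apply: eq_cofactor => a b /negbTE ai /negbTE bi.
by rewrite mulmx_tr_entry !row_set_row ai bi /= -mulmx_tr_entry mul1mx trmx1 mulmx1.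
Qed.

End SetRow.

Section InnerProduct.
Variable R : rcfType.

Lemma dotpE d (x y : 'rV[R]_d) : dotp x y = \sum_j x 0 j * y 0 j.
Proof. by rewrite /dotp mxE; apply: eq_bigr => j _; rewrite mxE. Qed.

Lemma dotpC d (x y : 'rV[R]_d) : dotp x y = dotp y x.
Proof. by rewrite !dotpE; apply: eq_bigr => j _; rewrite mulrC. Qed.

Lemma dotpDl d (x y z : 'rV[R]_d) : dotp (x + y) z = dotp x z + dotp y z.
Proof. by rewrite !dotpE -big_split; apply: eq_bigr => j _; rewrite mxE mulrDl. Qed.

Lemma dotpZl d a (x y : 'rV[R]_d) : dotp (a *: x) y = a * dotp x y.
Proof. by rewrite !dotpE mulr_sumr; apply: eq_bigr => j _; rewrite mxE mulrA. Qed.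

Lemma dotpDr d (x y z : 'rV[R]_d) : dotp x (y + z) = dotp x y + dotp x z.
Proof. by rewrite dotpC dotpDl !(dotpC x). Qed.

Lemma dotpZr d a (x y : 'rV[R]_d) : dotp x (a *: y) = a * dotp x y.
Proof. by rewrite dotpC dotpZl dotpC. Qed.

Lemma dotpp_ge0 d (x : 'rV[R]_d) : 0 <= dotp x x.
Proof. by rewrite dotpE; apply: sumr_ge0 => j _; rewrite -expr2 sqr_ge0. Qed.

Lemma dotpp_enorm1 d (x : 'rV[R]_d) : enorm x = 1 -> dotp x x = 1.
Proof. by rewrite /enorm => x1; rewrite -(sqr_sqrtr (dotpp_ge0 x)) x1 expr1n. Qed.

Lemma gram_entry k d (V : 'M[R]_(k, d)) j l :
  (V *m V^T) j l = dotp (row j V) (row l V).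
Proof. by have := mulmx_tr_entry V 1%:M V j l; rewrite !mulmx1. Qed.

Lemma quadratic_ge0_sqr_le (a b c : R) :
  0 <= c -> (forall t, 0 <= a - 2 * t * b + t ^+ 2 * c) -> b ^+ 2 <= a * c.
Proof.
rewrite le_eqVlt => /predU1P[<- | c_gt0] q_ge0.
  have [-> | b_neq0] := eqVneq b 0; first by have := q_ge0 0; lra.
  have := q_ge0 ((a + 1) / (2 * b)).
  have -> : a - 2 * ((a + 1) / (2 * b)) * b + ((a + 1) / (2 * b)) ^+ 2 * 0 = -1.
    by field; rewrite b_neq0.
  lra.
have := q_ge0 (b / c).
have -> : a - 2 * (b / c) * b + (b / c) ^+ 2 * c = (a * c - b ^+ 2) / c.
  by field; rewrite gt_eqF.
by rewrite pmulr_lge0 ?invr_gt0 // subr_ge0.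
Qed.

Lemma dotp_sqr_le d (x y : 'rV[R]_d) : dotp x y ^+ 2 <= dotp x x * dotp y y.
Proof.
apply: quadratic_ge0_sqr_le; first exact: dotpp_ge0.
move=> t; have := dotpp_ge0 (x + (- t) *: y).
rewrite dotpDl !dotpDr !dotpZl !dotpZr (dotpC y x); lra.
Qed.

End InnerProduct.

Section GramDeterminant.
Variable R : rcfType.
Implicit Types (k d : nat).

Lemma det_gram_le_cofactor k d (V : 'M[R]_(k, d)) i :
  dotp (row i V) (row i V) = 1 -> 0 < \det (V *m V^T) ->
  \det (V *m V^T) <= cofactor (V *m V^T) i i.
Proof.
set G := V *m V^T => vi1 detG_gt0.
have G_unit : G \in unitmx by rewrite unitmxE unitfE gt_eqF.
have G_sym : G^T = G by rewrite /G trmx_mul trmxK.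
(* Cauchy-Schwarz for [a := e_i G^-1 V], which has [<a, v_i> = 1] and
   [|a|^2 = (G^-1)_ii = cofactor G i i / det G]. *)
pose a : 'rV[R]_d := 'e_i *m invmx G *m V.
have a_vi : dotp a (row i V) = 1.
  rewrite /dotp rowE trmx_mul /a -!mulmxA (mulmxA V) -/G mulKmx //.
  by rewrite trmx_delta mul_delta_mx mxE.
have aa : dotp a a = invmx G i i.
  rewrite /dotp /a !trmx_mul -!mulmxA (mulmxA V) -/G mulKmx //.
  rewrite trmx_inv G_sym trmx_delta mulmxA.
  have := mulmx_tr_entry 1%:M (invmx G) 1%:M i i.
  by rewrite mul1mx trmx1 mulmx1 !row1 trmx_delta.
have := dotp_sqr_le a (row i V); rewrite a_vi vi1 aa expr1n mulr1.
by rewrite /invmx G_unit !mxE ler_pdivlMl // mulr1.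
Qed.

Lemma orthogonal_decomposition k d (V : 'M[R]_(k, d)) (w : 'rV[R]_d) :
  V *m V^T \in unitmx -> exists c u, w = c *m V + u /\ V *m u^T = 0.
Proof.
move=> G_unit; pose c := w *m V^T *m invmx (V *m V^T).
exists c, (w - c *m V); split; first by rewrite addrC subrK.
apply: trmx_inj; rewrite trmx_mul trmxK trmx0 mulmxBl -(mulmxA c) mulmxKV //.
exact: subrr.
Qed.

Lemma det_gram_set_row k d (V : 'M[R]_(k, d)) (c : 'rV[R]_k) (u : 'rV[R]_d) i :
  V *m u^T = 0 ->
  \det (set_row V i (c *m V + u) *m (set_row V i (c *m V + u))^T) =
  c 0 i ^+ 2 * \det (V *m V^T) + dotp u u * cofactor (V *m V^T) i i.
Proof.
move=> Vu0; set F := set_row 1%:M i c.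
have uV0 : u *m V^T = 0 by apply: trmx_inj; rewrite trmx_mul trmxK trmx0.
have -> : set_row V i (c *m V + u) = F *m V + delta_mx i 0 *m u.
  by rewrite set_rowD set_row_mulmx mul1mx.
have -> : (F *m V + delta_mx i 0 *m u) *m (F *m V + delta_mx i 0 *m u)^T =
          F *m (V *m V^T) *m F^T + dotp u u *: delta_mx i i.
  rewrite linearD /= mulmxDl !mulmxDr !trmx_mul !mulmxA.
  rewrite -(mulmxA F V u^T) Vu0 mulmx0 mul0mx addr0.
  rewrite -(mulmxA _ u V^T) uV0 mulmx0 mul0mx add0r -(mulmxA F V V^T); congr (_ + _).
  rewrite -(mulmxA _ u u^T) [u *m u^T]mx11_scalar mul_mx_scalar -scalemxAl.
  by rewrite trmx_delta mul_delta_mx.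
rewrite det_add_delta cofactor_set_row1_conj !det_mulmx det_tr det_set_row1.
by rewrite expr2 mulrA mulrAC.
Qed.

Lemma dotpp_mulmx_le k d (c : 'rV[R]_k) (V : 'M[R]_(k, d)) :
  (forall j, dotp (row j V) (row j V) = 1) ->
  dotp (c *m V) (c *m V) <= k%:R * \sum_j c 0 j ^+ 2.
Proof.
move=> V1; set G := V *m V^T; set S := \sum_j c 0 j ^+ 2.
have G_le1 j l : G j l ^+ 2 <= 1.
  by rewrite gram_entry; apply: le_trans (dotp_sqr_le _ _) _; rewrite !V1 mulr1.
have -> : dotp (c *m V) (c *m V) = \sum_l \sum_j c 0 j * G j l * c 0 l.
  rewrite /dotp trmx_mul !mulmxA -(mulmxA c) -/G mxE.
  by apply: eq_bigr => l _; rewrite mxE mulr_suml mxE.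
apply: (@le_trans _ _ (\sum_(l < k) \sum_(j < k) (c 0 j ^+ 2 + c 0 l ^+ 2) / 2)).
  apply: ler_sum => l _; apply: ler_sum => j _.
  have := G_le1 j l; set g := G j l; set x := c 0 j; set y := c 0 l => g_le1.
  have : 0 <= (x - g * y) ^+ 2 + (1 - g ^+ 2) * y ^+ 2.
    by apply: addr_ge0; [|apply: mulr_ge0; rewrite ?subr_ge0]; rewrite ?sqr_ge0.
  lra.
have -> : \sum_(l < k) \sum_(j < k) (c 0 j ^+ 2 + c 0 l ^+ 2) / 2 =
          \sum_(l < k) (S + c 0 l ^+ 2 *+ k) / 2.
  by apply: eq_bigr => l _; rewrite -mulr_suml big_split /= sumr_const card_ord.
by rewrite -mulr_suml big_split /= sumrMnl sumr_const card_ord -/S mulr_natl; lra.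
Qed.

Lemma exists_ge_mean k (f : 'I_k -> R) : (0 < k)%N ->
  exists i, \sum_j f j <= k%:R * f i.
Proof.
move=> k_gt0; case: (@arg_maxP _ _ _ (Ordinal k_gt0) xpredT f) => // i _ f_le.
exists i; rewrite mulr_natl -[k in _ *+ k]card_ord -sumr_const.
by apply: ler_sum => j _; apply: f_le.
Qed.

Lemma exists_det_gram_set_row_ge k d (V : 'M[R]_(k, d)) (w : 'rV[R]_d) :
  (0 < k)%N -> (forall j, dotp (row j V) (row j V) = 1) -> dotp w w = 1 ->
  0 < \det (V *m V^T) ->
  exists i, \det (V *m V^T) <= k%:R ^+ 2 * \det (set_row V i w *m (set_row V i w)^T).
Proof.
set G := V *m V^T => k_gt0 V1 w1 detG_gt0.
have [c [u [w_eq Vu0]]] : exists c u, w = c *m V + u /\ V *m u^T = 0.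
  by apply: orthogonal_decomposition; rewrite unitmxE unitfE gt_eqF.
subst w.
have [i ci_max] := exists_ge_mean (fun j => c 0 j ^+ 2) k_gt0.
exists i; rewrite det_gram_set_row // -/G.
have cof_ge := det_gram_le_cofactor (V1 i) detG_gt0; rewrite -/G in cof_ge.
have t_ge0 := dotpp_ge0 u.
have one_le : 1 <= k%:R ^+ 2 * (c 0 i ^+ 2 + dotp u u).
  have cV_le := dotpp_mulmx_le c V1.
  have cVu0 : dotp (c *m V) u = 0 by rewrite /dotp -mulmxA Vu0 mulmx0 mxE.
  rewrite dotpDl !dotpDr (dotpC u) cVu0 addr0 add0r in w1.
  have k_ge1 : 1 <= k%:R :> R by rewrite ler1n.
  have : k%:R * \sum_j c 0 j ^+ 2 <= k%:R ^+ 2 * c 0 i ^+ 2.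
    by rewrite expr2 -mulrA ler_wpM2l.
  have : dotp u u <= k%:R ^+ 2 * dotp u u by rewrite ler_peMl // exprn_ege1.
  lra.
apply: le_trans (_ : (k%:R ^+ 2 * (c 0 i ^+ 2 + dotp u u)) * \det G <= _).
  by rewrite ler_peMl // ltW.
rewrite -mulrA ler_wpM2l ?exprn_ge0 // mulrDl lerD2l.
by rewrite ler_wpM2l.
Qed.

End GramDeterminant.

Section Simplex.
Variable R : rcfType.
Implicit Types (k d : nat).

Lemma edge_mx_simplex0 k d (v : 'I_k -> 'rV[R]_d) : edge_mx (simplex0 v) = \matrix_j v j.
Proof. by apply/matrixP => j l; rewrite !mxE /simplex0 liftK unlift_none mxE subr0. Qed.

Lemma replace_at_mx k d (v : 'I_k -> 'rV[R]_d) i w :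
  \matrix_j replace_at v i w j = set_row (\matrix_j v j) i w.
Proof. by apply/matrixP => j l; rewrite !mxE /replace_at; case: (j == i). Qed.

Lemma svol_simplex0 k d (v : 'I_k -> 'rV[R]_d) :
  svol (simplex0 v) = Num.sqrt (\det (\matrix_j v j *m (\matrix_j v j)^T)) / k`!%:R.
Proof. by rewrite /svol edge_mx_simplex0. Qed.

Lemma svol_ge0 k d (a : 'I_k.+1 -> 'rV[R]_d) : 0 <= svol a.
Proof. by rewrite /svol divr_ge0 ?sqrtr_ge0. Qed.

Lemma enorm_sub_le_sdiam k d (a : 'I_k.+1 -> 'rV[R]_d) i j : enorm (a i - a j) <= sdiam a.
Proof. by rewrite /sdiam (bigD1 i) //= le_max (bigD1 j) //= le_max lexx. Qed.

Lemma dotp_subr_le d (x y : 'rV[R]_d) : dotp (x - y) (x - y) <= 2 * (dotp x x + dotp y y).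
Proof.
have := dotpp_ge0 (x + y); rewrite -scaleN1r !dotpDl !dotpDr !dotpZl !dotpZr (dotpC y x).
lra.
Qed.

Lemma sdiam_le2 k d (a : 'I_k.+1 -> 'rV[R]_d) :
  (forall j, dotp (a j) (a j) <= 1) -> sdiam a <= 2.
Proof.
move=> a_le1; apply: (big_ind (fun x => x <= 2)) => [|x y|i _]; rewrite ?ge_max; try lra.
apply: (big_ind (fun x => x <= 2)) => [|x y|j _]; rewrite ?ge_max; try lra.
rewrite /enorm -(ger0_norm (ler0n R 2)) -sqrtr_sqr ler_sqrt ?sqr_ge0 // expr2.
have := dotp_subr_le (a i) (a j); have := a_le1 i; have := a_le1 j; lra.
Qed.

Section UnitVertices.
Variables (k d : nat) (v : 'I_k -> 'rV[R]_d).
Hypothesis v1 : forall j, enorm (v j) = 1.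

Lemma sdiam_simplex0_ge1 : (0 < k)%N -> 1 <= sdiam (simplex0 v).
Proof.
move=> k_gt0; apply: le_trans (enorm_sub_le_sdiam _ (lift ord0 (Ordinal k_gt0)) ord0).
by rewrite /simplex0 liftK unlift_none subr0 v1.
Qed.

Lemma sdiam_simplex0_le2 : sdiam (simplex0 v) <= 2.
Proof.
apply: sdiam_le2 => j; rewrite /simplex0; case: (unlift ord0 j) => [i|].
  by rewrite dotpp_enorm1.
by rewrite /dotp mul0mx mxE.
Qed.

Lemma fullness_simplex0_le_svol : (0 < k)%N -> fullness (simplex0 v) <= svol (simplex0 v).
Proof.
move=> k_gt0; have diam_ge1 := sdiam_simplex0_ge1 k_gt0.
have diam_gt0 := lt_le_trans ltr01 diam_ge1.
by rewrite /fullness ler_pdivrMr ?ler_peMr ?svol_ge0 ?exprn_ege1 ?exprn_gt0.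
Qed.

Lemma svol_simplex0_le_fullness : (0 < k)%N ->
  svol (simplex0 v) <= 2 ^+ k * fullness (simplex0 v).
Proof.
move=> k_gt0; have diam_gt0 := lt_le_trans ltr01 (sdiam_simplex0_ge1 k_gt0).
rewrite /fullness mulrA ler_pdivlMr ?exprn_gt0 // [2 ^+ k * _]mulrC.
apply: ler_wpM2l; first exact: svol_ge0.
by rewrite lerXn2r ?nnegrE ?ler0n ?(ltW diam_gt0) ?sdiam_simplex0_le2.
Qed.

Lemma exists_svol_replace_at_ge (w : 'rV[R]_d) :
  (0 < k)%N -> enorm w = 1 -> 0 < svol (simplex0 v) ->
  exists i, svol (simplex0 v) <= k%:R * svol (simplex0 (replace_at v i w)).
Proof.
move=> k_gt0 w1 svol_gt0; set V := \matrix_j v j.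
have V1 j : dotp (row j V) (row j V) = 1 by rewrite rowK dotpp_enorm1.
have detG_gt0 : 0 < \det (V *m V^T).
  by move: svol_gt0; rewrite svol_simplex0 pmulr_lgt0 ?invr_gt0 ?ltr0n ?fact_gt0 // sqrtr_gt0.
have [i det_le] := exists_det_gram_set_row_ge k_gt0 V1 (dotpp_enorm1 w1) detG_gt0.
exists i; rewrite !svol_simplex0 replace_at_mx -/V mulrA ler_wpM2r ?invr_ge0 ?ler0n //.
rewrite -[k%:R]ger0_norm ?ler0n // -sqrtr_sqr -sqrtrM ?sqr_ge0 // ler_sqrt //.
exact: le_trans (ltW detG_gt0) det_le.
Qed.

End UnitVertices.

End Simplex.

Theorem lemma3p6 (R : rcfType) (d k : nat) (theta : R)
  (v : 'I_k -> 'rV[R]_d) (w : 'rV[R]_d) :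
  (2 <= k)%N -> (k <= d)%N -> 0 < theta ->
  (forall i, enorm (v i) = 1) -> enorm w = 1 ->
  theta <= fullness (simplex0 v) ->
  exists i : 'I_k,
    theta / (k%:R * 2 ^+ k.+1) <= fullness (simplex0 (replace_at v i w)).
Proof.
move=> k_ge2 _ theta_gt0 v1 w1 theta_le.
have k_gt0 : (0 < k)%N := ltnW k_ge2.
have theta_le_svol := le_trans theta_le (fullness_simplex0_le_svol v1 k_gt0).
have svol_gt0 := lt_le_trans theta_gt0 theta_le_svol.
have [i svol_le] := exists_svol_replace_at_ge v1 k_gt0 w1 svol_gt0.
exists i.
have vi1 j : enorm (replace_at v i w j) = 1 by rewrite /replace_at; case: (j == i).
have := svol_simplex0_le_fullness vi1 k_gt0.
set F := fullness _ => svol_le_F.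
have k_gt0R : 0 < k%:R :> R by rewrite ltr0n.
have : theta <= k%:R * (2 ^+ k * F).
  exact: le_trans theta_le_svol (le_trans svol_le (ler_wpM2l (ltW k_gt0R) svol_le_F)).
rewrite exprS ler_pdivrMr ?mulr_gt0 ?exprn_gt0 //; nra.
Qed.
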